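(* Let $N, M \ge 1$ be integers, let $t_1,\ldots,t_N$ be real time points and $f_1,\ldots,f_M$ real frequencies, and let $B\in\mathbb{C}^{N\times M}$ have entries $B_{k,m}=\exp(-i2\pi f_m t_k)$. Let $A=\left[\mathbf{1}_N\ \ \mathrm{Re}(B)\ \ \mathrm{Im}(B)\right]\in\mathbb{R}^{N\times(2M+1)}$, where $\mathbf{1}_N$ is the all-ones column vector. Let $\sigma^2>0$, let $\alpha_0,\alpha_1,\ldots,\alpha_M>0$, and let $\Gamma=\mathrm{diag}(\alpha_0,\alpha_1,\ldots,\alpha_M,\alpha_1,\ldots,\alpha_M)$. Let $\Omega=\{1,\ldots,N\}$. For $J\subseteq\Omega$ let $P_J\in\mathbb{R}^{N\times N}$ be the diagonal matrix with $(P_J)_{kk}=1$ if $k\in J$ and $0$ otherwise, and define $$\Sigma^{(J)}_{post_y}=\sigma^2 I_N + A\left(\tfrac{1}{\sigma^2}A^TP_JA+\Gamma^{-1}\right)^{-1}A^T,\qquad \Sigma_y=\sigma^2 I_N + A\Gamma A^T,$$ $$f(J)=\mathrm{tr}(\Sigma_y)-\mathrm{tr}\left(\Sigma^{(J)}_{post_y}\right),$$ and for $i\in\Omega$ the marginal gain $f_i(J)=f(J\cup\{i\})-f(J)$. Then $f_i(J)>0$ for all $J\subset\Omega$ and all $i\in\Omega\setminus J$.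
   Context: Here $\mathrm{Re}(B)$ and $\mathrm{Im}(B)$ denote the entrywise real and imaginary parts of $B$, and $\mathrm{tr}$ denotes the matrix trace. The matrix $\Sigma^{(J)}_{post_y}$ is the posterior predictive covariance of a Bayesian linear model $Y=AX+\text{noise}$ with prior covariance $\Gamma$ on $X$, noise variance $\sigma^2$, and observations only at the time indices in $J$. *)

From HB Require Import structures.
From mathcomp Require Import all_boot all_order all_algebra.
From mathcomp Require Import reals trigo.
Set Implicit Arguments. Unset Strict Implicit. Unset Printing Implicit Defensive.
Import Order.TTheory GRing.Theory Num.Theory.
Local Open Scope ring_scope.

Section Model.
Variables (R : realType) (N M : nat).
Variables (t : 'I_N -> R) (fr : 'I_M -> R).

(* B_{k,m} = exp(-i 2 pi f_m t_k): Re = cos(2 pi f_m t_k), Im = - sin(2 pi f_m t_k) *)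
Definition ReB : 'M[R]_(N, M) := \matrix_(k, m) cos (2 * pi * fr m * t k).
Definition ImB : 'M[R]_(N, M) := \matrix_(k, m) - sin (2 * pi * fr m * t k).

Definition Amx : 'M[R]_(N, 1 + (M + M)) :=
  row_mx (const_mx 1) (row_mx ReB ImB).

Definition Gamma (a0 : R) (a : 'I_M -> R) : 'M[R]_(1 + (M + M)) :=
  diag_mx (row_mx (a0%:M : 'M[R]_1) (row_mx (\row_m a m) (\row_m a m))).

Definition PJ (J : {set 'I_N}) : 'M[R]_N := diag_mx (\row_k (k \in J)%:R).

Definition Sigma_post (s2 a0 : R) (a : 'I_M -> R) (J : {set 'I_N}) : 'M[R]_N :=
  s2%:M + Amx *m invmx (s2^-1 *: (Amx^T *m PJ J *m Amx) + invmx (Gamma a0 a)) *m Amx^T.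

Definition Sigma_y (s2 a0 : R) (a : 'I_M -> R) : 'M[R]_N :=
  s2%:M + Amx *m Gamma a0 a *m Amx^T.

Definition fgain (s2 a0 : R) (a : 'I_M -> R) (J : {set 'I_N}) : R :=
  \tr (Sigma_y s2 a0 a) - \tr (Sigma_post s2 a0 a J).

Definition marginal_gain (s2 a0 : R) (a : 'I_M -> R) (i : 'I_N) (J : {set 'I_N}) : R :=
  fgain s2 a0 a (J :|: [set i]) - fgain s2 a0 a J.
End Model.

(* Write Q_J := s2^-1 A^T P_J A + Gamma^-1, a positive definite matrix, so that
   f(J) = \tr(A Gamma A^T) - \tr(A Q_J^-1 A^T).  Adding a time index i changes Q_J
   by the rank-one term s2^-1 a^T a, where a is the i-th row of A, and the
   Sherman-Morrison formula gives
     Q_J^-1 - Q_(J+i)^-1 = s2^-1 / (1 + s2^-1 q) * Q_J^-1 a^T a Q_J^-1,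
   with q = a Q_J^-1 a^T > 0.  Hence f_i(J) is a positive multiple of
   |A Q_J^-1 a^T|^2, and the i-th coordinate of that vector is q > 0;
   a != 0 because the first column of A is all ones. *)
From HB Require Import structures.
From mathcomp Require Import all_boot all_order all_algebra.
From mathcomp Require Import reals trigo.
From mathcomp Require Import ring lra.
Set Implicit Arguments. Unset Strict Implicit. Unset Printing Implicit Defensive.
Import Order.TTheory GRing.Theory Num.Theory.
Local Open Scope ring_scope.

Section PositiveDefinite.
Variable R : realFieldType.

Definition posdef n (Q : 'M[R]_n) :=
  forall u : 'rV_n, u != 0 -> 0 < (u *m Q *m u^T) 0 0.

Definition posemidef n (Q : 'M[R]_n) :=
  forall u : 'rV_n, 0 <= (u *m Q *m u^T) 0 0.

Lemma quadform_diag n (d u : 'rV[R]_n) :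
  (u *m diag_mx d *m u^T) 0 0 = \sum_j d 0 j * u 0 j ^+ 2.
Proof. by rewrite mul_mx_diag !mxE; apply: eq_bigr => j _; rewrite !mxE; ring. Qed.

Lemma posdef_diag n (d : 'rV[R]_n) : (forall j, 0 < d 0 j) -> posdef (diag_mx d).
Proof.
move=> d_gt0 u u_neq0; rewrite quadform_diag.
have [j uj_neq0] : exists j, u 0 j != 0.
  apply/existsP; apply: contraR u_neq0 => /existsPn u0.
  by apply/eqP/rowP => j; rewrite mxE; apply/eqP/negPn.
rewrite (bigD1 j) //= ltr_pwDl //.
  by rewrite mulr_gt0 // exprn_even_gt0 //= uj_neq0.
by apply: sumr_ge0 => k _; rewrite mulr_ge0 ?sqr_ge0 ?ltW.
Qed.

Lemma posemidef_diag n (d : 'rV[R]_n) : (forall j, 0 <= d 0 j) -> posemidef (diag_mx d).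
Proof.
by move=> d_ge0 u; rewrite quadform_diag sumr_ge0 // => j _; rewrite mulr_ge0 ?sqr_ge0.
Qed.

Lemma posemidef_congr m n (B : 'M[R]_(m, n)) (S : 'M_m) :
  posemidef S -> posemidef (B^T *m S *m B).
Proof.
move=> S_psd u; have := S_psd (u *m B^T).
by rewrite trmx_mul trmxK !mulmxA.
Qed.

Lemma posemidefZ n c (S : 'M[R]_n) : 0 <= c -> posemidef S -> posemidef (c *: S).
Proof. by move=> c_ge0 S_psd u; rewrite -scalemxAr -scalemxAl mxE mulr_ge0. Qed.

Lemma posdefD n (Q S : 'M[R]_n) : posdef Q -> posemidef S -> posdef (S + Q).
Proof.
move=> Q_pd S_psd u u_neq0.
by rewrite mulmxDr mulmxDl mxE ltr_wpDl ?S_psd ?Q_pd.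
Qed.

Lemma posdef_unitmx n (Q : 'M[R]_n) : posdef Q -> Q \in unitmx.
Proof.
move=> Q_pd; rewrite -row_free_unit -kermx_eq0; apply/eqP/row_matrixP => j.
rewrite row0; apply/eqP; apply: contraT => u_neq0.
have := Q_pd _ u_neq0; rewrite -row_mul mulmx_ker row0 mul0mx mxE.
by rewrite ltxx.
Qed.

Lemma posdef_invmx n (Q : 'M[R]_n) : Q^T = Q -> posdef Q -> posdef (invmx Q).
Proof.
move=> Q_sym Q_pd u u_neq0.
have Q_unit := posdef_unitmx Q_pd.
have uQ_neq0 : u *m invmx Q != 0.
  by apply: contraNneq u_neq0 => uQ0; rewrite -(mulmxKV Q_unit u) uQ0 mul0mx.
have := Q_pd _ uQ_neq0.
by rewrite trmx_mul trmx_inv Q_sym mulmxKV // mulmxA.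
Qed.

End PositiveDefinite.

Section RankOneUpdate.
Variable R : fieldType.

Lemma invmx_rank1_update n (Q : 'M[R]_n) (a : 'rV_n) c :
  let q := (a *m invmx Q *m a^T) 0 0 in
  Q \in unitmx -> Q + c *: (a^T *m a) \in unitmx -> 1 + c * q != 0 ->
  invmx Q - invmx (Q + c *: (a^T *m a))
    = (c / (1 + c * q)) *: (invmx Q *m a^T *m (a *m invmx Q)).
Proof.
move=> q Q_unit Q'_unit q_neq0.
set X := invmx Q; set Y := invmx (Q + _).
have Q'Xa : (Q + c *: (a^T *m a)) *m (X *m a^T) = (1 + c * q) *: a^T.
  rewrite mulmxDl mulmxA mulmxV // mul1mx -scalemxAl -!mulmxA.
  rewrite [a *m (X *m a^T)]mx11_scalar mul_mx_scalar mulmxA -/q.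
  by rewrite scalerA scalerDl scale1r mulrC.
have YaT : Y *m a^T = (1 + c * q)^-1 *: (X *m a^T).
  by rewrite -[X *m a^T](mulKmx Q'_unit) Q'Xa -scalemxAr scalerA mulVf ?scale1r.
have -> : X - Y = Y *m (c *: (a^T *m a)) *m X.
  rewrite -[c *: _](addrK Q) [_ + Q]addrC.
  by rewrite mulmxBr mulmxBl mulVmx // mul1mx mulmxK.
by rewrite -scalemxAr -scalemxAl !mulmxA YaT -!scalemxAl scalerA mulrC.
Qed.

End RankOneUpdate.

Section TraceDecrease.
Variable R : realFieldType.

Lemma mxtrace_mul_tr N (v : 'cV[R]_N) : \tr (v^T *m v) = \sum_k v k 0 ^+ 2.
Proof. by rewrite /mxtrace big_ord1 mxE; apply: eq_bigr => k _; rewrite mxE expr2. Qed.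

Lemma mxtrace_rank1_update_lt N n (A : 'M[R]_(N, n)) (Q : 'M_n) c i :
  let Q' := Q + c *: ((row i A)^T *m row i A) in
  Q^T = Q -> posdef Q -> Q' \in unitmx -> 0 < c -> row i A != 0 ->
  \tr (A *m invmx Q' *m A^T) < \tr (A *m invmx Q *m A^T).
Proof.
move=> Q' Q_sym Q_pd Q'_unit c_gt0 a_neq0; set a := row i A in Q' Q'_unit a_neq0 *.
set X := invmx Q; set q := (a *m X *m a^T) 0 0.
have X_sym : X^T = X by rewrite trmx_inv Q_sym.
have q_gt0 : 0 < q by apply: posdef_invmx.
have cq_gt0 : 0 < 1 + c * q by rewrite ltr_wpDl // mulr_gt0.
set v := A *m (X *m a^T).
have vi : v i 0 = q by rewrite /q -mulmxA -row_mul [RHS]mxE.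
have v_norm_gt0 : 0 < \sum_k v k 0 ^+ 2.
  rewrite (bigD1 i) //= vi ltr_pwDl ?exprn_even_gt0 ?gt_eqF //.
  by apply: sumr_ge0 => k _; rewrite sqr_ge0.
rewrite -subr_gt0 -raddfB /= -mulmxBl -mulmxBr invmx_rank1_update;
  [|exact: posdef_unitmx|by []|by rewrite gt_eqF].
rewrite -/X -/q -scalemxAr -scalemxAl mxtraceZ.
have -> : A *m (X *m a^T *m (a *m X)) *m A^T = v *m v^T.
  by rewrite /v !trmx_mul trmxK X_sym !mulmxA.
by rewrite mxtrace_mulC mxtrace_mul_tr mulr_gt0 ?divr_gt0.
Qed.

End TraceDecrease.

Section ObservationMask.
Variable R : realType.

Lemma posemidef_PJ N (J : {set 'I_N}) : posemidef (PJ R J).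
Proof. by apply: posemidef_diag => k; rewrite mxE ler0n. Qed.

Lemma PJ_setU1 N (J : {set 'I_N}) i : i \notin J ->
  PJ R (J :|: [set i]) = PJ R J + delta_mx i i.
Proof.
move=> iNJ; apply/matrixP => k l; rewrite !mxE in_setU in_set1.
have [<-|kl] := eqVneq k l; last first.
  by rewrite !mulr0n add0r; case: eqP => // <-; rewrite eq_sym (negbTE kl).
rewrite !mulr1n andbb; have [->|ki] := eqVneq k i.
  by rewrite (negbTE iNJ) add0r.
by rewrite orbF addr0.
Qed.

Lemma mulmx_delta_tr N n (A : 'M[R]_(N, n)) i :
  A^T *m delta_mx i i *m A = (row i A)^T *m row i A.
Proof.
by rewrite rowE trmx_mul -(mul_delta_mx (0 : 'I_1)) trmx_delta !mulmxA.
Qed.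

Definition info_mx N n (A : 'M[R]_(N, n)) (D : 'M_n) c (J : {set 'I_N}) :=
  c *: (A^T *m PJ R J *m A) + D.

Lemma info_mx_tr N n (A : 'M[R]_(N, n)) D c J :
  D^T = D -> (info_mx A D c J)^T = info_mx A D c J.
Proof.
move=> D_sym; rewrite /info_mx linearD linearZ /= D_sym !trmx_mul trmxK.
by rewrite /PJ tr_diag_mx mulmxA.
Qed.

Lemma info_mx_posdef N n (A : 'M[R]_(N, n)) D c J :
  posdef D -> 0 <= c -> posdef (info_mx A D c J).
Proof.
move=> D_pd c_ge0; apply: posdefD => //.
exact/posemidefZ/posemidef_congr/posemidef_PJ.
Qed.

Lemma info_mx_setU1 N n (A : 'M[R]_(N, n)) D c (J : {set 'I_N}) i :
  i \notin J ->
  info_mx A D c (J :|: [set i]) = info_mx A D c J + c *: ((row i A)^T *m row i A).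
Proof.
move=> iNJ; rewrite /info_mx PJ_setU1 // mulmxDr mulmxDl scalerDr addrAC.
by rewrite mulmx_delta_tr.
Qed.

Lemma trace_info_gain_gt0 N n (A : 'M[R]_(N, n)) D c (J : {set 'I_N}) i :
  D^T = D -> posdef D -> 0 < c -> i \notin J -> row i A != 0 ->
  0 < \tr (A *m invmx (info_mx A D c J) *m A^T)
      - \tr (A *m invmx (info_mx A D c (J :|: [set i])) *m A^T).
Proof.
move=> D_sym D_pd c_gt0 iNJ a_neq0.
rewrite subr_gt0 info_mx_setU1 //; apply: mxtrace_rank1_update_lt => //.
- exact: info_mx_tr.
- exact/info_mx_posdef/ltW.
- by rewrite -info_mx_setU1 //; apply/posdef_unitmx/info_mx_posdef/ltW.
Qed.

End ObservationMask.

Section Model.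
Variables (R : realType) (N M : nat) (t : 'I_N -> R) (fr : 'I_M -> R).

Lemma Gamma_posdef a0 (a : 'I_M -> R) :
  0 < a0 -> (forall m, 0 < a m) -> posdef (Gamma a0 a).
Proof.
move=> a0_gt0 a_gt0; apply: posdef_diag => j; rewrite -[j]splitK.
case: split => [k|k] /=; first by rewrite row_mxEl mxE (ord1 k) mulr1n.
by rewrite row_mxEr -[k]splitK; case: split => l /=; rewrite ?row_mxEl ?row_mxEr mxE.
Qed.

Lemma Gamma_tr a0 (a : 'I_M -> R) : (Gamma a0 a)^T = Gamma a0 a.
Proof. exact: tr_diag_mx. Qed.

Lemma Amx_row_neq0 i : row i (Amx t fr) != 0.
Proof.
apply/eqP => /rowP/(_ (lshift (M + M) 0)).
by rewrite /Amx mxE row_mxEl !mxE; apply/eqP; rewrite oner_eq0.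
Qed.

End Model.

Theorem lemma1 (R : realType) (N M : nat) (hN : (0 < N)%N) (hM : (0 < M)%N)
  (t : 'I_N -> R) (fr : 'I_M -> R) (s2 a0 : R) (a : 'I_M -> R)
  (hs2 : 0 < s2) (ha0 : 0 < a0) (ha : forall m, 0 < a m)
  (J : {set 'I_N}) (i : 'I_N) (hi : i \notin J) :
  0 < marginal_gain t fr s2 a0 a i J.
Proof.
have invGamma_tr : (invmx (Gamma a0 a))^T = invmx (Gamma a0 a).
  by rewrite trmx_inv Gamma_tr.
have invGamma_pd := posdef_invmx (Gamma_tr a0 a) (Gamma_posdef ha0 ha).
have s2V_gt0 : 0 < s2^-1 by rewrite invr_gt0.
have := trace_info_gain_gt0 invGamma_tr invGamma_pd s2V_gt0 hi (Amx_row_neq0 t fr i).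
rewrite /marginal_gain /fgain /Sigma_post !mxtraceD /info_mx.
lra.
Qed.
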